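(* Let $n\ge3$ and let $M\subseteq[n]$ be nonempty with $l(M)=l$. Then $h(M)\le 1+2l\log n$, where $\log$ is the binary logarithm.
   Context: $[n]:=\{0,1,\ldots,n\}$, $\mathbb{N}=\{0,1,2,\ldots\}$. For a set $M$ of integers, $l(M)$ is the maximum number of consecutive integers contained in $M$. For a finite $L\subseteq\mathbb{N}$ and an integer $r$, write $L+r:=\{x+r: x\in L,\ x+r\ge 0\}$. Define $h$ on finite subsets of $\mathbb{N}$ recursively on $|L|$: $h(\emptyset)=0$, and for $L\neq\emptyset$, $$h(L)=1+\max\Big\{h(L\cap(L+1)),\ \max_{M'\in T(L)}\min\{h(L\cap M'),\,h(L\cap(M'-1))\}\Big\},$$ where $T(L)$ is the set of all finite $M'\subseteq\mathbb{N}$ with $M'\notin\{L,L+1\}$ and $0<|M'|\le|L|$. *)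

From Stdlib Require Import ClassicalEpsilon.
From mathcomp Require Import all_boot.
Set Implicit Arguments. Unset Strict Implicit. Unset Printing Implicit Defensive.

(* Finite subsets of N are represented by sequences of naturals, read as sets
   (membership; duplicates irrelevant). |L| = size (undup L). *)

Definition pb (P : Prop) : bool :=
  if excluded_middle_informative P then true else false.

Definition card_set (L : seq nat) : nat := size (undup L).
Definition inter (A B : seq nat) : seq nat := [seq x <- A | x \in B].
Definition shift_up (L : seq nat) : seq nat := [seq x.+1 | x <- L].
Definition shift_down (L : seq nat) : seq nat := [seq x.-1 | x <- L & 0 < x].

Definition inT (L M' : seq nat) : Prop :=
  ~ (M' =i L) /\ ~ (M' =i shift_up L) /\ 0 < card_set M' /\ card_set M' <= card_set L.

(* Fuelled version of the recursion; all values of h_fuel k are <= k, so the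
   inner maximum over the (infinite) family T(L) is taken over values v < k'.+1. *)
Fixpoint h_fuel (k : nat) (L : seq nat) : nat :=
  match k with
  | 0 => 0
  | k'.+1 =>
      if card_set L == 0 then 0 else
      1 + maxn (h_fuel k' (inter L (shift_up L)))
               (\max_(v < k'.+1 | pb (exists M', inT L M' /\
                     nat_of_ord v = minn (h_fuel k' (inter L M'))
                              (h_fuel k' (inter L (shift_down M'))))) v)
  end.

(* The recursion descends to proper subsets, so fuel |L| suffices. *)
Definition h (L : seq nat) : nat := h_fuel (card_set L) L.

Definition lcons (M : seq nat) : nat :=
  \max_(k < (card_set M).+1 | pb (exists a, all (fun x => x \in M) (iota a k))) k.

(* Call a set L "l-run-free" when it contains no l+1 consecutive integers;
   M is l(M)-run-free.  We prove the natural-logarithm bound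
        h(L) <= 1 + 2 l ln |L|          for every l-run-free nonempty L,
   by induction on the recursion defining h.  Write L' = L ∩ (L+1) and let
   s = |L| - |L'| be the number of maximal blocks of consecutive elements of L
   (their first elements are the elements of L \ (L+1)).
   - L' is (l-1)-run-free and |L'| <= |L|, and L' nonempty forces |L| >= 2;
     so 1 + 2(l-1) ln |L'| <= 2 l ln |L| since 2 ln 2 >= 1.
   - For M' with |M'| <= |L|, the map x |-> x+1 sends L ∩ (M'-1) into M',
     and only elements of L' can be hit twice, hence
        |L ∩ M'| + |L ∩ (M'-1)| <= |M'| + |L'| <= 2|L| - s.
     Each block has at most l elements, so |L| <= l s, and the smaller of the
     two intersections has size x with 2 l x <= (2l-1)|L|; the tangent bound
     ln t <= t - 1 then gives 1 + 2 l ln x <= 2 l ln |L|.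
   Finally |M| <= n+1 and ln (n+1) <= ln n / ln 2 for n >= 3. *)

From Stdlib Require Import Reals Lra ClassicalEpsilon.
From mathcomp Require Import all_boot zify.

Set Implicit Arguments. Unset Strict Implicit. Unset Printing Implicit Defensive.

Section LogarithmBounds.
Local Open Scope R_scope.

Lemma ln_le_compat x y : 0 < x -> x <= y -> ln x <= ln y.
Proof. by move=> x0 [xy | <-]; [left; apply: ln_increasing | right]. Qed.

Lemma ln_le_pred y : 0 < y -> ln y <= y - 1.
Proof.
move=> y0; rewrite -(ln_exp (y - 1)); apply: ln_le_compat => //.
by have := exp_ineq1_le (y - 1); lra.
Qed.

(* A crude numerical upper bound for ln 2, from exp (3/32) >= 35/32. *)
Lemma ln2_le_3_4 : ln 2 <= 3 / 4.
Proof.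
rewrite -(ln_exp (3 / 4)); apply: ln_le_compat; first lra.
have -> : exp (3 / 4) = exp (3 / 32) * exp (3 / 32) * exp (3 / 32) * exp (3 / 32) *
                        exp (3 / 32) * exp (3 / 32) * exp (3 / 32) * exp (3 / 32).
  by rewrite -!exp_plus; f_equal; lra.
have := exp_ineq1_le (3 / 32); set e := exp (3 / 32) => e_ge.
have e2 : e * e >= 1225 / 1024 by nra.
have e4 : e * e * e * e >= 1500625 / 1048576 by nra.
nra.
Qed.

(* ln 3 >= 1, since e <= 3. *)
Lemma ln_ge1 x : 3 <= x -> 1 <= ln x.
Proof.
move=> x3; rewrite -(ln_exp 1); apply: ln_le_compat; first exact: exp_pos.
by have := exp_le_3; lra.
Qed.

Lemma ln_le_log2 n m : 3 <= n -> 1 <= m -> m <= n + 1 -> ln m <= ln n / ln 2.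
Proof.
move=> n3 m1 mn.
have ln2_gt := ln_lt_2; have ln2_le := ln2_le_3_4; have lnn := ln_ge1 n3.
have ln_m : ln m <= ln (n + 1) by apply: ln_le_compat; lra.
have ln_succ : ln (n + 1) <= ln n + / n.
  have q0 : 0 < (n + 1) / n by apply: Rdiv_lt_0_compat; lra.
  rewrite -{1}(_ : (n + 1) / n * n = n + 1); last by field; lra.
  rewrite ln_mult //; last lra.
  have := ln_le_pred q0; rewrite (_ : (n + 1) / n - 1 = / n); last by field; lra.
  lra.
have inv_n : / n <= 1 / 3 by rewrite /Rdiv Rmult_1_l; apply: Rinv_le_contravar; lra.
have inv_ln2 : 4 / 3 <= / ln 2.
  by rewrite (_ : 4 / 3 = / (3 / 4)); [apply: Rinv_le_contravar; lra | field].
rewrite /Rdiv; nra.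
Qed.

(* The inequality behind the branch L ∩ (L+1) of the recursion. *)
Lemma log_bound_shrink_run a m l : 1 <= a -> a <= m -> 2 <= m -> 1 <= l ->
  1 + 2 * (l - 1) * ln a <= 2 * l * ln m.
Proof.
move=> a1 am m2 l1; have := ln_lt_2.
have : ln a <= ln m by apply: ln_le_compat; lra.
have : ln 2 <= ln m by apply: ln_le_compat; lra.
have : 0 <= ln a by rewrite -ln_1; apply: ln_le_compat; lra.
nra.
Qed.

(* The inequality behind the branches L ∩ M' and L ∩ (M'-1) of the recursion. *)
Lemma log_bound_split a m l : 0 < a -> 0 < m -> 1 <= l ->
  2 * l * a <= (2 * l - 1) * m -> 1 + 2 * l * ln a <= 2 * l * ln m.
Proof.
move=> a0 m0 l1 alm.
have q0 : 0 < a / m by apply: Rdiv_lt_0_compat.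
rewrite -{1}(_ : a / m * m = a); last by field; lra.
rewrite ln_mult //.
have : 2 * l * (a / m) <= 2 * l - 1.
  apply: (Rmult_le_reg_r m) => //.
  by rewrite (_ : 2 * l * (a / m) * m = 2 * l * a); [lra | field; lra].
have := ln_le_pred q0; nra.
Qed.

End LogarithmBounds.

Lemma pbP (P : Prop) : pb P = true <-> P.
Proof. by rewrite /pb; case: excluded_middle_informative. Qed.

Lemma card_inter L X : card_set (inter L X) = size [seq x <- undup L | x \in X].
Proof. by rewrite /card_set /inter filter_undup. Qed.

Lemma inter_sub L X : {subset inter L X <= L}.
Proof. by move=> x; rewrite mem_filter => /andP[]. Qed.

Lemma mem_shift_up L x : (x \in shift_up L) = (0 < x) && (x.-1 \in L).
Proof.
case: x => [|x] /=; first by apply/mapP => -[].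
by rewrite /shift_up (mem_map succn_inj).
Qed.

Lemma mem_shift_down M x : (x \in shift_down M) = (x.+1 \in M).
Proof.
apply/mapP/idP => [[y] | xM]; last by exists x.+1; rewrite ?mem_filter.
by rewrite mem_filter => /andP[y0 yM] ->; case: y y0 yM.
Qed.

Lemma card_set_pos M : M != [::] -> 0 < card_set M.
Proof.
case: M => // x M _; move: (mem_head x M); rewrite /card_set -mem_undup.
by case: undup.
Qed.

Lemma card_set_le n M : all (fun x => x <= n) M -> card_set M <= n.+1.
Proof.
move=> Mn; rewrite -(size_iota 0 n.+1); apply: uniq_leq_size; first exact: undup_uniq.
by move=> x; rewrite mem_undup mem_iota add0n ltnS => /(allP Mn).
Qed.

Definition run_free (l : nat) (L : seq nat) : Prop :=
  forall a, ~~ all (fun x => x \in L) (iota a l.+1).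

Lemma run_free_sub l L L' : {subset L' <= L} -> run_free l L -> run_free l L'.
Proof.
move=> sub rf a; apply: contra (rf a) => /allP run.
by apply/allP => x /run /sub.
Qed.

Lemma run_free0 L : run_free 0 L -> card_set L = 0.
Proof.
move=> rf; rewrite /card_set; case E: (undup L) => [|x s] //.
have xL : x \in L by rewrite -mem_undup E mem_head.
by move: (rf x); rewrite /= xL.
Qed.

Lemma run_free_lcons M : run_free (lcons M) M.
Proof.
move=> a; apply/negP => run.
have sz : (lcons M).+1 < (card_set M).+1.
  rewrite ltnS -(size_iota a (lcons M).+1); apply: uniq_leq_size; first exact: iota_uniq.
  by move=> x /(allP run); rewrite mem_undup.
have := @leq_bigmax_cond _
  (fun k : 'I_(card_set M).+1 => pb (exists a, all (fun x => x \in M) (iota a k)))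
  (fun k => nat_of_ord k) (Ordinal sz) ltac:(by apply/pbP; exists a).
by rewrite /= -/(lcons M) ltnn.
Qed.

(* A run of length l+1 inside L ∩ (L+1) extends one step down to a run of
   length l+2 inside L, so L ∩ (L+1) is (l-1)-run-free. *)
Lemma run_free_shift_meet l L : run_free l L -> run_free l.-1 (inter L (shift_up L)).
Proof.
case: l => [|l] rf; first exact: run_free_sub (@inter_sub _ _) rf.
move=> a /=; apply/negP => /andP[+ run].
rewrite mem_filter mem_shift_up => /andP[/andP[a0 a1L] aL].
move: (rf a.-1) => /negP; apply; rewrite /= a1L prednK // aL /=.
by apply/allP => x /(allP run) /inter_sub.
Qed.

Definition block_starts (L : seq nat) : seq nat :=
  [seq x <- undup L | x \notin shift_up L].

Lemma block_starts_card L :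
  size (block_starts L) + card_set (inter L (shift_up L)) = card_set L.
Proof. by rewrite card_inter !size_filter addnC; exact: count_predC. Qed.

Lemma block_start_below l L : run_free l L -> forall t j,
  all (fun x => x \in L) (iota t j.+1) ->
  exists s, [/\ s \in L, s \notin shift_up L, s <= t + j & t + j < s + l].
Proof.
move=> rf; have short t j : all (fun x => x \in L) (iota t j.+1) -> j < l.
  rewrite ltnNge; apply: contraL => lj; apply: contra (rf t).
  by rewrite (_ : j.+1 = l.+1 + (j - l)) ?iotaD ?all_cat; [case/andP | lia].
elim=> [|t IH] j run.
  have jl := short _ _ run; exists 0; split => //.
  - by case/andP: run.
  - by rewrite mem_shift_up.
case tS: (t.+1 \in shift_up L).
  move: tS; rewrite mem_shift_up /= => tL.
  have [s [? ? ? ?]] := IH j.+1 ltac:(by rewrite /= tL).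
  by exists s; rewrite addSnnS.
have jl := short _ _ run; exists t.+1; split.
- by case/andP: run.
- by rewrite tS.
- exact: leq_addr.
- by rewrite ltn_add2l.
Qed.

Lemma card_le_block_starts l L : run_free l L -> card_set L <= l * size (block_starts L).
Proof.
move=> rf; have size_blocks (S : seq nat) : size (flatten [seq iota s l | s <- S]) = l * size S.
  by elim: S => [|s S IH] /=; rewrite ?muln0 // size_cat size_iota IH mulnS.
rewrite -size_blocks; apply: uniq_leq_size; first exact: undup_uniq.
move=> x; rewrite mem_undup => xL.
have [s [sL sS sx xs]] := block_start_below rf (t := x) (j := 0) ltac:(by rewrite /= xL).
apply/flatten_mapP; exists s; first by rewrite mem_filter sS mem_undup.
by rewrite addn0 in sx xs; rewrite mem_iota sx xs.
Qed.

(* x |-> x+1 maps L ∩ (M'-1) into M' and can only hit L ∩ M' at points of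
   L ∩ (L+1); hence the two intersections together are not larger than
   |M'| + |L ∩ (L+1)|. *)
Lemma card_split_le L M' :
  card_set (inter L M') + card_set (inter L (shift_down M'))
  <= card_set M' + card_set (inter L (shift_up L)).
Proof.
rewrite !card_inter.
set A := [seq x <- undup L | x \in M'].
set B := [seq x <- undup L | x \in shift_down M'].
have uA : uniq A by rewrite filter_uniq ?undup_uniq.
have uB1 : uniq (map succn B) by rewrite (map_inj_uniq succn_inj) filter_uniq ?undup_uniq.
rewrite -(size_map succn B) -(count_predC (fun x => x \notin map succn B) A).
rewrite -!size_filter addnAC; apply: leq_add.
  rewrite -size_cat; apply: uniq_leq_size.
    rewrite cat_uniq filter_uniq // uB1 andbT.
    by apply/hasPn => x xB; rewrite mem_filter xB.
  move=> x; rewrite mem_cat mem_undup => /orP[|/mapP[y]].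
    by rewrite !mem_filter => /andP[_ /andP[]].
  by rewrite mem_filter mem_shift_down => /andP[yM _] ->.
apply: uniq_leq_size; first by rewrite filter_uniq.
move=> x; rewrite mem_filter /= negbK => /andP[/mapP[y yB ->] yA].
move: yA yB; rewrite !mem_filter !mem_undup => /andP[_ yL] /andP[_ yL'].
by rewrite mem_shift_up /= yL yL'.
Qed.

Lemma card_split_min_le l L M' x : run_free l L -> card_set M' <= card_set L ->
  x <= card_set (inter L M') -> x <= card_set (inter L (shift_down M')) ->
  2 * l * x <= (2 * l - 1) * card_set L.
Proof.
move=> rf M'L xa xb.
have card_le := card_le_block_starts rf.
have starts_eq := block_starts_card L; have split_le := card_split_le L M'.
set s := size (block_starts L) in card_le starts_eq *.
have : l * (2 * x + s) <= l * (2 * card_set L) by rewrite leq_mul2l; apply/orP; right; lia.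
nia.
Qed.

Lemma h_fuel_empty k L : card_set L = 0 -> h_fuel k L = 0.
Proof. by case: k => //= k ->. Qed.

Lemma INR_maxn_le a b (B : R) : Rle (INR a) B -> Rle (INR b) B -> Rle (INR (maxn a b)) B.
Proof. by rewrite /maxn; case: ifP. Qed.

Lemma INR_bigmax_le k (P : pred 'I_k) (B : R) : Rle 0 B ->
  (forall i : 'I_k, P i -> Rle (INR i) B) -> Rle (INR (\max_(i | P i) i)) B.
Proof. by move=> B0 le_B; elim/big_rec: _ => // i x Pi; exact: INR_maxn_le (le_B i Pi). Qed.

Lemma INR_leq a b : a <= b -> Rle (INR a) (INR b).
Proof. by move=> ab; apply: le_INR; apply/leP. Qed.

Lemma ln_INR_ge0 m : 0 < m -> Rle 0 (ln (INR m)).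
Proof. by move=> m0; rewrite -ln_1; apply: ln_le_compat; [lra | exact: INR_leq m0]. Qed.

Lemma shift_meet_bound l L : run_free l L -> 0 < card_set (inter L (shift_up L)) ->
  Rle (Rplus 1 (Rmult (Rmult 2 (INR l.-1)) (ln (INR (card_set (inter L (shift_up L)))))))
      (Rmult (Rmult 2 (INR l)) (ln (INR (card_set L)))).
Proof.
move=> rf L'0; have card_le := card_le_block_starts rf.
have starts_eq := block_starts_card L.
have l0 : 0 < l by case: l {rf} card_le => //; rewrite mul0n; lia.
rewrite (_ : INR l.-1 = Rminus (INR l) 1); last by rewrite -(prednK l0) S_INR /=; lra.
apply: log_bound_shrink_run.
- exact: INR_leq L'0.
- by apply: INR_leq; lia.
- by apply: (@INR_leq 2); nia.
- exact: INR_leq l0.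
Qed.

Lemma split_bound l L X : 0 < l -> 0 < card_set X ->
  2 * l * card_set X <= (2 * l - 1) * card_set L ->
  Rle (Rplus 1 (Rmult (Rmult 2 (INR l)) (ln (INR (card_set X)))))
      (Rmult (Rmult 2 (INR l)) (ln (INR (card_set L)))).
Proof.
move=> l0 X0 XL; apply: log_bound_split.
- by apply: lt_0_INR; apply/ltP.
- by apply: lt_0_INR; apply/ltP; nia.
- exact: INR_leq l0.
- have := INR_leq XL; rewrite !mult_INR minus_INR; last by lia.
  by rewrite mult_INR /=; lra.
Qed.

Lemma h_fuel_bound k L l : run_free l L -> 0 < card_set L ->
  Rle (INR (h_fuel k L)) (Rplus 1 (Rmult (Rmult 2 (INR l)) (ln (INR (card_set L))))).
Proof.
elim: k L l => [|k IH] L l rf L0.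
  by rewrite /=; have := ln_INR_ge0 L0; have := pos_INR l; nra.
have l0 : 0 < l by case: l rf => // rf; rewrite run_free0 in L0.
have bound_ge0 : Rle 0 (Rmult (Rmult 2 (INR l)) (ln (INR (card_set L)))).
  by have := ln_INR_ge0 L0; have := INR_leq l0; rewrite /=; nra.
rewrite /= ifN -?lt0n // add1n S_INR Rplus_comm; apply: Rplus_le_compat_l.
apply: INR_maxn_le.
  case: (posnP (card_set (inter L (shift_up L)))) => [L'_empty | L'_pos].
    by rewrite h_fuel_empty //; exact: bound_ge0.
  exact: Rle_trans (IH _ _ (run_free_shift_meet rf) L'_pos) (shift_meet_bound rf L'_pos).
apply: INR_bigmax_le => // v /pbP [M' [[_ [_ [_ M'L]]] ->]].
have sub_bound X : {subset X <= L} -> 2 * l * card_set X <= (2 * l - 1) * card_set L ->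
    Rle (INR (h_fuel k X)) (Rmult (Rmult 2 (INR l)) (ln (INR (card_set L)))).
  move=> sub XL; case: (posnP (card_set X)) => [X_empty | X_pos].
    by rewrite h_fuel_empty //; exact: bound_ge0.
  exact: Rle_trans (IH _ _ (run_free_sub sub rf) X_pos) (split_bound l0 X_pos XL).
case: (leqP (card_set (inter L M')) (card_set (inter L (shift_down M')))) => ab.
  apply: Rle_trans (sub_bound _ (@inter_sub _ _) (card_split_min_le rf M'L (leqnn _) ab)).
  exact/INR_leq/geq_minl.
apply: Rle_trans (sub_bound _ (@inter_sub _ _) (card_split_min_le rf M'L (ltnW ab) (leqnn _))).
exact/INR_leq/geq_minr.
Qed.

Theorem proposition14 (n : nat) (M : seq nat) :
  3 <= n -> M != [::] -> all (fun x => x <= n) M ->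
  Rle (INR (h M))
      (Rplus 1 (Rmult (Rmult 2 (INR (lcons M))) (Rdiv (ln (INR n)) (ln 2)))).
Proof.
move=> n3 M0 Mn; have M_pos := card_set_pos M0.
apply: Rle_trans (h_fuel_bound (card_set M) (run_free_lcons M) M_pos) _.
apply: Rplus_le_compat_l; apply: Rmult_le_compat_l.
  by have := pos_INR (lcons M); lra.
apply: ln_le_log2.
- by have := INR_leq n3; rewrite /=; lra.
- by have := INR_leq M_pos; rewrite /=; lra.
- by rewrite -S_INR; apply/INR_leq/card_set_le.
Qed.
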